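(* Let $(M,\rho)$ be a complete metric space, let $f,g:M\to\mathbb{R}\cup\{+\infty\}$ be lower semicontinuous, and let $f$ also be proper and bounded below. Then $$\inf_{x\in\operatorname{dom} f}(f(x)-g(x))=\inf_{x\in\operatorname{dom}|\widetilde\nabla f|}(f(x)-g(x)).$$
   Context: $\operatorname{dom} f:=\{x:f(x)<+\infty\}$; on $\operatorname{dom} f$, $f(x)-g(x)\in\mathbb{R}\cup\{-\infty\}$ (equal to $-\infty$ if $g(x)=+\infty$). $[t]^+:=\max\{0,t\}$ (with $[f(x)-f(y)]^+:=0$ if $f(y)=+\infty$). For $x\in\operatorname{dom} f$, the global slope is $|\widetilde\nabla f|(x):=\sup_{y\neq x}\frac{[f(x)-f(y)]^+}{\rho(x,y)}\in[0,+\infty]$, and $\operatorname{dom}|\widetilde\nabla f|:=\{x\in\operatorname{dom} f:\ |\widetilde\nabla f|(x)<+\infty\}$. *)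

From HB Require Import structures.
From mathcomp Require Import all_boot all_order all_algebra.
From mathcomp Require Import all_classical all_reals ereal.
Set Implicit Arguments. Unset Strict Implicit. Unset Printing Implicit Defensive.
Import Order.TTheory GRing.Theory Num.Theory.
Local Open Scope classical_set_scope.
Local Open Scope ring_scope.
Local Open Scope ereal_scope.

Definition is_metric {R : realType} {M : Type} (rho : M -> M -> R) : Prop :=
  [/\ (forall x y, (0 <= rho x y)%R),
      (forall x y, rho x y = 0%R <-> x = y),
      (forall x y, rho x y = rho y x) &
      (forall x y z, (rho x z <= rho x y + rho y z)%R)].

Definition metric_complete {R : realType} {M : Type} (rho : M -> M -> R) : Prop :=
  forall u : nat -> M,
    (forall e : R, (0 < e)%R -> exists N : nat, forall m n : nat,
        (N <= m)%N -> (N <= n)%N -> (rho (u m) (u n) < e)%R) ->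
    exists x : M, forall e : R, (0 < e)%R -> exists N : nat, forall n : nat,
        (N <= n)%N -> (rho (u n) x < e)%R.

Definition lsc {R : realType} {M : Type} (rho : M -> M -> R) (f : M -> \bar R) : Prop :=
  forall x : M, forall t : R, t%:E < f x ->
    exists d : R, (0 < d)%R /\ forall y : M, (rho x y < d)%R -> t%:E < f y.

Definition edom {R : realType} {M : Type} (f : M -> \bar R) : set M :=
  [set x | f x < +oo].

(* [a - b]^+ , with the convention [a - b]^+ := 0 if b = +oo (a finite) *)
Definition posdiff {R : realType} (a b : \bar R) : R :=
  match b with
  | b'%:E => Num.max 0%R (fine a - b')%R
  | _ => 0%R
  end.

Definition gslope {R : realType} {M : Type} (rho : M -> M -> R) (f : M -> \bar R)
  (x : M) : \bar R :=
  ereal_sup [set ((posdiff (f x) (f y)) / rho x y)%:E | y in [set y | y <> x]].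

Definition dom_gslope {R : realType} {M : Type} (rho : M -> M -> R) (f : M -> \bar R)
  : set M := [set x | f x < +oo /\ gslope rho f x < +oo].

From HB Require Import structures.
From mathcomp Require Import all_boot all_order all_algebra.
From mathcomp Require Import all_classical all_reals ereal lra.
Import Order.TTheory GRing.Theory Num.Theory.
Local Open Scope classical_set_scope.
Local Open Scope ring_scope.

(* Fix x in dom f and a level t above f x - g x.  By lower semicontinuity of
   g there is a ball of radius d around x on which g > f x - t.  Ekeland's
   variational principle with slope eps = (f x - m + 1) / d, m a lower bound
   of f, gives y with f y + eps * rho x y <= f x, so y stays in that ball and
   f y <= f x, and with f y <= f z + eps * rho y z for all z, i.e.
   |~∇f|(y) <= eps.  Hence y is in dom |~∇f| and f y - g y < t.

   Ekeland's principle is proved with the usual sequence: u_(n+1) is chosen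
   in the set S(u_n) = {z | F z + eps * rho u_n z <= F u_n} with F (u_(n+1))
   within 1/(n+1) of the infimum of F there.  The sets S(u_n) are nested
   with shrinking diameters, so (u_n) is Cauchy, and they are closed by lower
   semicontinuity, so the limit lies in all of them and is the wanted point. *)

Section Ekeland.
Context {R : realType} {M : Type} {rho : M -> M -> R}.
Context {D : set M} {F : M -> R} {m eps : R}.
Hypothesis rho_metric : is_metric rho.
Hypothesis rho_complete : metric_complete rho.
(* [F], extended by [+oo] outside [D], is lower semicontinuous. *)
Hypothesis F_lsc : forall y s, (D y -> s < F y) ->
  exists d, 0 < d /\ forall z, rho y z < d -> D z -> s < F z.
Hypothesis F_lb : forall z, D z -> m <= F z.
Hypothesis eps_gt0 : 0 < eps.

Let rho_ge0 x y : 0 <= rho x y. Proof. by case: rho_metric. Qed.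
Let rho_xx x : rho x x = 0.
Proof. by case: rho_metric => _ rho0 _ _; apply/rho0. Qed.
Let rhoC x y : rho x y = rho y x. Proof. by case: rho_metric. Qed.
Let rho_triangle x y z : rho x z <= rho x y + rho y z.
Proof. by case: rho_metric. Qed.

Let eps_rho_triangle x y z : eps * rho x z <= eps * rho x y + eps * rho y z.
Proof. by rewrite -mulrDr ler_wpM2l ?(ltW eps_gt0). Qed.

Definition ekeland_below u z := D z /\ F z + eps * rho u z <= F u.

Lemma ekeland_below_refl u : D u -> ekeland_below u u.
Proof. by move=> Du; split => //; rewrite rho_xx mulr0 addr0. Qed.

Lemma ekeland_below_trans {a b c} :
  ekeland_below a b -> ekeland_below b c -> ekeland_below a c.
Proof.
move=> [_ Hab] [Dc Hbc]; split => //.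
have := eps_rho_triangle a b c; lra.
Qed.

Lemma ekeland_below_closed u y :
  (forall e, 0 < e -> exists2 z, ekeland_below u z & rho z y < e) ->
  ekeland_below u y.
Proof.
move=> near_y; apply: contrapT => not_below.
pose t := F u - eps * rho u y.
have t_lt : D y -> t < F y.
  move=> Dy; rewrite ltNge; apply/negP => Fy_le.
  by apply: not_below; split => //; rewrite /t in Fy_le; lra.
have [s [ts s_lt]] : exists s, t < s /\ (D y -> s < F y).
  case: (pselect (D y)) => Dy; last by exists (t + 1); split => //; lra.
  by exists ((t + F y) / 2); have := t_lt Dy; split; lra.
have [d [d_gt0 Hd]] := @F_lsc y s s_lt.
have r_gt0 : 0 < Num.min d ((s - t) / eps).
  by rewrite lt_min d_gt0 divr_gt0 // subr_gt0.
have [z [Dz Hz]] := near_y _ r_gt0; rewrite lt_min => /andP[zy_d zy_st].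
have s_lt_Fz : s < F z by apply: Hd => //; rewrite rhoC.
rewrite ltr_pdivlMr // mulrC in zy_st.
have := eps_rho_triangle u z y; rewrite /t in ts zy_st; lra.
Qed.

Lemma ekeland_below_near_inf {r u} : 0 < r -> D u ->
  exists v, ekeland_below u v /\
    forall w, ekeland_below u w -> F v <= F w + r.
Proof.
move=> r_gt0 Du; pose A := [set F w | w in ekeland_below u].
have A_inf : has_inf A.
  split; first by exists (F u), u => //; exact: ekeland_below_refl.
  by exists m => _ [w [Dw _] <-]; exact: F_lb.
have [_ [v below_v <-] Hv] := inf_adherent r_gt0 A_inf.
exists v; split => // w below_w.
have : inf A <= F w by apply: (ge_inf (proj2 A_inf)); exists w.
lra.
Qed.

Section EkelandSequence.
Variable u : nat -> M.
Hypothesis u0_dom : D (u 0%N).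
Hypothesis u_below : forall n, ekeland_below (u n) (u n.+1).
Hypothesis u_near_inf : forall {n w},
  ekeland_below (u n) w -> F (u n.+1) <= F w + n.+1%:R^-1.

Lemma ekeland_seq_dom n : D (u n).
Proof. by case: n => // n; case: (u_below n). Qed.

Lemma ekeland_seq_below {n k} : (n <= k)%N -> ekeland_below (u n) (u k).
Proof.
move=> /subnKC <-; elim: (k - n)%N => [|j IH].
  by rewrite addn0; exact/ekeland_below_refl/ekeland_seq_dom.
by rewrite addnS; exact: ekeland_below_trans IH (u_below _).
Qed.

Lemma ekeland_seq_dist {n k} : (n < k)%N ->
  eps * rho (u n.+1) (u k) <= n.+1%:R^-1.
Proof.
move=> nk; have [_ Hk] := ekeland_seq_below nk.
have := u_near_inf (ekeland_seq_below (ltnW nk)); set q := n.+1%:R^-1; lra.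
Qed.

Lemma ekeland_seq_cauchy c : 0 < c -> exists N, forall a b,
  (N <= a)%N -> (N <= b)%N -> rho (u a) (u b) < c.
Proof.
move=> c_gt0; have ce_gt0 : 0 < eps * c / 2 by rewrite divr_gt0 ?mulr_gt0.
have [j] := ltr_add_invr ce_gt0; rewrite add0r => hj.
exists j.+1 => a b ja jb; rewrite -(ltr_pM2l eps_gt0).
have := ekeland_seq_dist ja; have := ekeland_seq_dist jb.
have := eps_rho_triangle (u a) (u j.+1) (u b); rewrite [rho (u a) (u j.+1)]rhoC.
set q := j.+1%:R^-1 in hj *; set ec := eps * c in hj *; lra.
Qed.

Lemma ekeland_seq_lim_below y :
  (forall e, 0 < e -> exists N, forall n, (N <= n)%N -> rho (u n) y < e) ->
  forall n, ekeland_below (u n) y.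
Proof.
move=> u_cvg n; apply: ekeland_below_closed => e /u_cvg[N HN].
exists (u (maxn N n)); [exact/ekeland_seq_below/leq_maxr | exact/HN/leq_maxl].
Qed.

Lemma ekeland_seq_lim_min y : (forall n, ekeland_below (u n) y) ->
  forall z, D z -> F y <= F z + eps * rho y z.
Proof.
move=> below_y z Dz; rewrite leNgt; apply/negP => Fz_lt.
have below_z : ekeland_below y z by split => //; lra.
have Fy_le j : F y <= F z + j.+1%:R^-1.
  have := u_near_inf (ekeland_below_trans (below_y j) below_z).
  have [_] := below_y j.+1; have := mulr_ge0 (ltW eps_gt0) (rho_ge0 (u j.+1) y).
  set q := j.+1%:R^-1; lra.
have : 0 < F y - F z by have := mulr_ge0 (ltW eps_gt0) (rho_ge0 y z); lra.
move=> /ltr_add_invr[j]; rewrite add0r.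
by have := Fy_le j; set q := j.+1%:R^-1; lra.
Qed.

End EkelandSequence.

Theorem ekeland_variational x : D x -> exists y,
  [/\ D y, F y + eps * rho x y <= F x &
      forall z, D z -> F y <= F z + eps * rho y z].
Proof.
move=> Dx.
have step (p : nat * M) : exists v, D p.2 -> ekeland_below p.2 v /\
    forall w, ekeland_below p.2 w -> F v <= F w + p.1.+1%:R^-1.
  case: (pselect (D p.2)) => Dp; last by exists p.2.
  have inv_gt0 : 0 < p.1.+1%:R^-1 :> R by rewrite invr_gt0 ltr0n.
  by have [v Hv] := ekeland_below_near_inf inv_gt0 Dp; exists v.
have [next Hnext] := choice step.
pose u := fix u n := if n is k.+1 then next (k, u k) else x.
have Du n : D (u n) by elim: n => // n IH; exact: (Hnext (n, u n) IH).1.1.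
have u_below n : ekeland_below (u n) (u n.+1) := (Hnext (n, u n) (Du n)).1.
have u_near_inf n := (Hnext (n, u n) (Du n)).2.
have [y u_cvg] := rho_complete u (ekeland_seq_cauchy u Dx u_below u_near_inf).
have below_y n : ekeland_below (u n) y by exact: ekeland_seq_lim_below u_cvg n.
have [Dy Fy_le] := below_y 0%N.
by exists y; split => //; exact: ekeland_seq_lim_min u u_near_inf y below_y.
Qed.

End Ekeland.

Local Open Scope ereal_scope.

Lemma lee_of_ltEFin (R : realFieldType) (x y : \bar R) :
  (forall t : R, x < t%:E -> y <= t%:E) -> y <= x.
Proof.
case: x => [r | | ] y_le; rewrite ?leey //.
  by apply/lee_addgt0Pr => e e_gt0; apply: y_le; rewrite lte_fin ltrDl.
by rewrite (eq_ninfty (fun r => y_le r (ltNyr r))).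
Qed.

Lemma ereal_inf_image_approx (T : Type) (R : realType) (h : T -> \bar R)
    (A B : set T) :
  B `<=` A ->
  (forall x, A x -> forall t : R, h x < t%:E -> exists2 y, B y & h y < t%:E) ->
  ereal_inf (h @` A) = ereal_inf (h @` B).
Proof.
move=> BA approx; apply/eqP; rewrite eq_le; apply/andP; split.
  exact/ereal_inf_le_tmp/image_subset.
apply: le_ereal_inf_tmp => _ [x Ax <-]; apply: lee_of_ltEFin => t.
move=> /(approx x Ax)[y By hy_lt]; apply/ltW/(le_lt_trans _ hy_lt).
by apply: ereal_inf_lbound; exists y.
Qed.

Lemma gslope_le (R : realType) (M : Type) (rho : M -> M -> R)
    (f : M -> \bar R) (y : M) (r eps : R) :
  is_metric rho -> (0 <= eps)%R -> f y = r%:E ->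
  (forall z b, f z = b%:E -> (r <= b + eps * rho y z)%R) ->
  gslope rho f y <= eps%:E.
Proof.
move=> [rho_ge0 rho_eq0 _ _] eps_ge0 fy cone.
apply: ge_ereal_sup => _ [z zy <-].
have rho_gt0 : (0 < rho y z)%R.
  by rewrite lt_neqAle rho_ge0 andbT eq_sym; apply/eqP => /rho_eq0/esym.
rewrite lee_fin ler_pdivrMr // fy /posdiff.
case fz: (f z) => [b | | ]; last 2 first; [exact: mulr_ge0.. |].
by rewrite ge_max mulr_ge0 //=; have := cone z b fz; lra.
Qed.

Lemma lsc_fine_edom {R : realType} {M : Type} {rho : M -> M -> R}
    {f : M -> \bar R} :
  (forall x, f x != -oo) -> lsc rho f ->
  forall y s, (edom f y -> (s < fine (f y))%R) ->
  exists d, (0 < d)%R /\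
    forall z, (rho y z < d)%R -> edom f z -> (s < fine (f z))%R.
Proof.
move=> fN f_lsc y s s_lt.
have [|d [d_gt0 Hd]] := f_lsc y s.
  move: s_lt (fN y); rewrite /edom /=; case: (f y) => [b | | ] //= s_lt _.
    by rewrite lte_fin s_lt ?ltry.
  exact: ltry.
by exists d; split => // z /Hd; rewrite /edom /=; case: (f z).
Qed.

Lemma dom_gslope_approx (R : realType) (M : Type) (rho : M -> M -> R)
    (f g : M -> \bar R) :
  is_metric rho -> metric_complete rho ->
  (forall x, f x != -oo) -> (forall x, g x != -oo) ->
  lsc rho f -> lsc rho g ->
  (exists m : R, forall x, m%:E <= f x) ->
  forall x, edom f x -> forall t : R, f x - g x < t%:E ->
  exists2 y, dom_gslope rho f y & f y - g y < t%:E.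
Proof.
move=> rho_metric rho_complete fN gN f_lsc g_lsc [m f_lb] x fx t fgx_lt.
have f_fine z : edom f z -> f z = (fine (f z))%:E.
  by move: (fN z); rewrite /edom /=; case: (f z) => // _; rewrite ltxx.
have F_lb z : edom f z -> (m <= fine (f z))%R.
  by move=> fz; have := f_lb z; rewrite f_fine.
have [r fx_eq] : exists r, f x = r%:E by exists (fine (f x)); exact: f_fine.
have g_gt : (r - t)%:E < g x.
  move: fgx_lt (gN x); rewrite fx_eq; case: (g x) => // [b | ] /=.
    by rewrite -EFinB !lte_fin => ? _; lra.
  by move=> _ _; exact: ltry.
have [d [d_gt0 Hd]] := g_lsc x _ g_gt.
have m_le_r : (m <= r)%R by have := F_lb x fx; rewrite fx_eq.
pose eps := ((r - m + 1) / d)%R.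
have eps_gt0 : (0 < eps)%R by rewrite divr_gt0 //; lra.
have eps_d : (eps * d = r - m + 1)%R.
  by rewrite mulrAC -mulrA divff ?mulr1 ?gt_eqF.
have [y [fy Fy_le Fy_min]] := ekeland_variational rho_metric rho_complete
  (lsc_fine_edom fN f_lsc) F_lb eps_gt0 x fx.
rewrite fx_eq /= in Fy_le.
have [rho_ge0 _ _ _] := rho_metric.
have xy_d : (rho x y < d)%R.
  rewrite -(ltr_pM2l eps_gt0) eps_d; have := F_lb y fy.
  have := mulr_ge0 (ltW eps_gt0) (rho_ge0 x y); lra.
exists y.
  split => //; apply: le_lt_trans (ltry eps).
  apply: gslope_le rho_metric (ltW eps_gt0) (f_fine y fy) _ => z b fz.
  by have := Fy_min z; rewrite /edom /= fz; apply; exact: ltry.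
have := mulr_ge0 (ltW eps_gt0) (rho_ge0 x y).
move: (Hd y xy_d) (gN y); rewrite (f_fine y fy); case: (g y) => // [b | ] /=.
  by rewrite -EFinB !lte_fin => ? _; lra.
by rewrite addeNy ltNyr.
Qed.

Theorem lemma2p8 (R : realType) (M : Type) (rho : M -> M -> R)
  (f g : M -> \bar R) :
  is_metric rho -> metric_complete rho ->
  (forall x, f x != -oo) -> (forall x, g x != -oo) ->
  lsc rho f -> lsc rho g ->
  (exists x0, f x0 < +oo) ->
  (exists m : R, forall x, m%:E <= f x) ->
  ereal_inf [set f x - g x | x in edom f] =
  ereal_inf [set f x - g x | x in dom_gslope rho f].
Proof.
move=> rho_metric rho_complete fN gN f_lsc g_lsc _ f_lb.
apply: ereal_inf_image_approx => [y [] // | x fx t].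
exact: dom_gslope_approx.
Qed.
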